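(* Let $Q=(q_n)_{n\ge1}$ be a basic sequence that is infinite in limit. For each integer $i\ge1$ set $$\bar\varepsilon_i=\frac{\left(\sum_{j=1}^i 2l_j\right)+i+1}{\left(\sum_{j=1}^i jl_j\right)+i+1},$$ and for each positive integer $n$ let $i(n)$ be the unique integer with $L_{i(n)}<n\le L_{i(n)+1}$. Then $\lim_{n\to\infty}\bar\varepsilon_{i(n)}=0$.
   Context: A basic sequence is a sequence $Q=(q_n)_{n\ge1}$ of integers with $q_n\ge 2$; it is infinite in limit if $q_n\to\infty$. $\mathbb{N}$ denotes the positive integers. For each positive integer $j$ let $\nu_j=\min\{N : q_m\ge 2j^2 \text{ for all } m\ge N\}$. Define $l_1=\max(\nu_2-1,1)$ and, recursively for $i\ge 2$, $l_i=\max\big(\min\{k\in\mathbb{N} : l_1+2l_2+\cdots+(i-1)l_{i-1}+ik\ge \nu_{i+1}-1\},1\big)$. Put $L_i=\sum_{j=1}^i jl_j$, with $L_0=0$. *)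

From Stdlib Require Import Reals Lia Arith ClassicalEpsilon.
Open Scope R_scope.

(* A sequence q : nat -> nat; only indices n >= 1 are meaningful (q_1, q_2, ...). *)
Definition basic_sequence (q : nat -> nat) : Prop :=
  forall n : nat, (1 <= n)%nat -> (2 <= q n)%nat.

Definition infinite_in_limit (q : nat -> nat) : Prop :=
  forall M : nat, exists N : nat, forall n : nat, (N <= n)%nat -> (M <= q n)%nat.

(* The least positive integer satisfying P (chosen by epsilon; meaningful
   when such an integer exists). *)
Definition least_pos (P : nat -> Prop) : nat :=
  epsilon (inhabits 0%nat)
    (fun k => (1 <= k)%nat /\ P k /\ forall k', (1 <= k')%nat -> P k' -> (k <= k')%nat).

Definition nu (q : nat -> nat) (j : nat) : nat :=
  least_pos (fun N => forall m : nat, (N <= m)%nat -> (2 * j * j <= q m)%nat).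

(* lL q i = (l_i, L_i); lL q 0 = (dummy, L_0 = 0). *)
Fixpoint lL (q : nat -> nat) (i : nat) : nat * nat :=
  match i with
  | O => (0%nat, 0%nat)
  | S O => let l1 := Nat.max (nu q 2 - 1) 1 in (l1, l1)
  | S (S k as i') =>
      let '(_, Lprev) := lL q i' in
      let li := Nat.max
                  (least_pos (fun k' => (nu q (i + 1) - 1 <= Lprev + i * k')%nat)) 1 in
      (li, (Lprev + i * li)%nat)
  end.

Definition l (q : nat -> nat) (i : nat) : nat := fst (lL q i).
Definition L (q : nat -> nat) (i : nat) : nat := snd (lL q i).

Fixpoint sum_1_to (f : nat -> nat) (i : nat) : nat :=
  match i with O => 0%nat | S k => (sum_1_to f k + f (S k))%nat end.

Definition eps_bar (q : nat -> nat) (i : nat) : R :=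
  INR (sum_1_to (fun j => 2 * l q j)%nat i + i + 1) /
  INR (sum_1_to (fun j => j * l q j)%nat i + i + 1).

Definition i_of (q : nat -> nat) (n : nat) : nat :=
  epsilon (inhabits 0%nat) (fun i => (L q i < n <= L q (i + 1))%nat).

From Stdlib Require Import Reals Lia Lra Psatz ClassicalEpsilon.
Open Scope R_scope.

(* Every l_j is at least 1, so L_i = sum_{j<=i} j l_j grows at least like i^2/2
   and in particular L_i -> oo, which forces i(n) -> oo.  For a fixed cut-off K,
   the terms 2 l_j with j > K contribute at most 2 L_i / K to the numerator of
   eps_bar_i, while the head sum_{j<=K} 2 l_j and the summand i + 1 are o(L_i). *)

Lemma sum_1_to_mono (f : nat -> nat) (i j : nat) :
  (i <= j)%nat -> (sum_1_to f i <= sum_1_to f j)%nat.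
Proof. induction 1 as [|j _ IH]; simpl; lia. Qed.

(* Tail estimate: a term f j with j > K is at most (j / K) f j. *)
Lemma sum_1_to_le_weighted (c : nat) (f : nat -> nat) (K i : nat) :
  (K * sum_1_to (fun j => c * f j) i <=
   K * sum_1_to (fun j => c * f j) K + c * sum_1_to (fun j => j * f j) i)%nat.
Proof.
  induction i as [|i IH]; simpl; [lia|].
  destruct (Nat.le_gt_cases (S i) K) as [hiK | hKi].
  - pose proof (sum_1_to_mono (fun j => c * f j)%nat _ _ hiK) as hmono; simpl in hmono.
    nia.
  - assert (K * f (S i) <= S i * f (S i))%nat by (apply Nat.mul_le_mono_r; lia).
    nia.
Qed.

Lemma sum_1_to_weighted_ge_triangle (f : nat -> nat) (i : nat) :
  (forall j, (1 <= j)%nat -> (1 <= f j)%nat) ->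
  (i * (i + 1) <= 2 * sum_1_to (fun j => j * f j) i)%nat.
Proof.
  intros hf; induction i as [|i IH]; simpl; [lia|].
  pose proof (hf (S i) ltac:(lia)). nia.
Qed.

Lemma weighted_ratio_cv (f : nat -> nat) :
  (forall j, (1 <= j)%nat -> (1 <= f j)%nat) ->
  Un_cv (fun i => INR (sum_1_to (fun j => 2 * f j) i + i + 1)%nat /
                  INR (sum_1_to (fun j => j * f j) i + i + 1)%nat) 0.
Proof.
  intros hf eps heps.
  (* K eps > 4 bounds the tail by eps W / 2; then i eps > 4 head + 4 together with
     2 W >= i (i + 1) absorbs head + i + 1 into eps (W / 2 + i + 1). *)
  destruct (INR_archimed eps 4 heps) as [K hK].
  set (head := sum_1_to (fun j => 2 * f j)%nat K) in *.
  destruct (INR_archimed eps (4 * INR head + 4) heps) as [i0 hi0].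
  exists i0; intros i hi.
  unfold R_dist; rewrite Rminus_0_r.
  pose proof (sum_1_to_le_weighted 2 f K i) as htail.
  pose proof (sum_1_to_weighted_ge_triangle f i hf) as htri.
  fold head in htail.
  set (A := sum_1_to (fun j => 2 * f j)%nat i) in *.
  set (W := sum_1_to (fun j => j * f j)%nat i) in *.
  apply le_INR in htail, htri, hi.
  rewrite plus_INR, !mult_INR in htail.
  rewrite !mult_INR, plus_INR in htri.
  rewrite !plus_INR.
  change (INR 2) with 2 in htail, htri; change (INR 1) with 1 in htri |- *.
  assert (0 <= INR A) by apply pos_INR.
  assert (0 <= INR W) by apply pos_INR.
  assert (0 <= INR head) by apply pos_INR.
  assert (0 <= INR i) by apply pos_INR.
  assert (hKpos : 0 < INR K) by (destruct K; simpl in hK; [lra | apply lt_0_INR; lia]).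
  assert (hD : 0 < INR W + INR i + 1) by lra.
  rewrite Rabs_pos_eq by (apply Rmult_le_pos; [| apply Rlt_le, Rinv_0_lt_compat]; lra).
  apply (Rmult_lt_reg_r (INR W + INR i + 1)); [exact hD|].
  unfold Rdiv; rewrite Rmult_assoc, Rinv_l, Rmult_1_r by lra.
  assert (hnum : INR A <= INR head + eps * INR W / 2).
  { apply (Rmult_le_reg_l (INR K)); [exact hKpos|].
    assert (0 <= (INR K * eps - 4) * INR W) by (apply Rmult_le_pos; lra).
    rewrite Rmult_plus_distr_l. unfold Rdiv. lra. }
  assert (hi_large : eps * INR i > 4 * INR head + 4) by nra.
  nra.
Qed.

Lemma Un_cv_comp_unbounded (a : nat -> R) (g : nat -> nat) (x : R) :
  Un_cv a x -> (forall k, exists N, forall n, (N <= n)%nat -> (k <= g n)%nat) ->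
  Un_cv (fun n => a (g n)) x.
Proof.
  intros ha hg eps heps.
  destruct (ha eps heps) as [k hk].
  destruct (hg k) as [N hN].
  exists N; intros n hn. exact (hk _ (hN n hn)).
Qed.

Lemma lL_succ_succ (q : nat -> nat) (k : nat) :
  exists li, (1 <= li)%nat /\ lL q (S (S k)) = (li, (L q (S k) + S (S k) * li)%nat).
Proof.
  unfold L.
  change (lL q (S (S k))) with
    (let '(_, Lprev) := lL q (S k) in
     let li := Nat.max
       (least_pos (fun k' => (nu q (S (S k) + 1) - 1 <= Lprev + S (S k) * k')%nat)) 1 in
     (li, (Lprev + S (S k) * li)%nat)).
  destruct (lL q (S k)) as [l_prev Lprev]; cbv zeta.
  eexists; split; [|reflexivity]. lia.
Qed.

Lemma l_ge1 (q : nat -> nat) (j : nat) : (1 <= j)%nat -> (1 <= l q j)%nat.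
Proof.
  intros hj; destruct j as [|[|k]]; [lia|unfold l; simpl; lia|].
  destruct (lL_succ_succ q k) as [li [hli E]]. unfold l; rewrite E. exact hli.
Qed.

Lemma L_succ (q : nat -> nat) (i : nat) : L q (S i) = (L q i + S i * l q (S i))%nat.
Proof.
  destruct i as [|k]; [unfold L, l; simpl; lia|].
  destruct (lL_succ_succ q k) as [li [_ E]]. unfold l; unfold L at 1; rewrite E. reflexivity.
Qed.

Lemma L_mono (q : nat -> nat) (i j : nat) : (i <= j)%nat -> (L q i <= L q j)%nat.
Proof. induction 1; [lia|]. rewrite L_succ. lia. Qed.

Lemma L_ge_id (q : nat -> nat) (i : nat) : (i <= L q i)%nat.
Proof.
  induction i as [|i IH]; [lia|].
  rewrite L_succ. pose proof (l_ge1 q (S i) ltac:(lia)). nia.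
Qed.

Lemma L_bracket (q : nat -> nat) (n : nat) :
  (0 < n)%nat -> exists i, (L q i < n <= L q (i + 1))%nat.
Proof.
  intros hn.
  assert (hex : forall m, (n <= L q m)%nat -> exists i, (L q i < n <= L q (i + 1))%nat).
  { induction m as [|m IH]; intros hm; [unfold L in hm; simpl in hm; lia|].
    destruct (Nat.le_gt_cases n (L q m)); [now apply IH|].
    exists m; rewrite Nat.add_1_r; lia. }
  exact (hex n (L_ge_id q n)).
Qed.

Lemma i_of_spec (q : nat -> nat) (n : nat) :
  (0 < n)%nat -> (L q (i_of q n) < n <= L q (i_of q n + 1))%nat.
Proof. intros hn. unfold i_of. apply epsilon_spec, L_bracket, hn. Qed.

Lemma i_of_unbounded (q : nat -> nat) (k : nat) :
  exists N, forall n, (N <= n)%nat -> (k <= i_of q n)%nat.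
Proof.
  exists (S (L q k)); intros n hn.
  destruct (i_of_spec q n ltac:(lia)) as [_ hupper].
  destruct (Nat.le_gt_cases k (i_of q n)) as [|hlt]; [assumption|].
  pose proof (L_mono q (i_of q n + 1) k ltac:(lia)). lia.
Qed.

Theorem mainTheorem16 (q : nat -> nat)
  (hbasic : basic_sequence q) (hinf : infinite_in_limit q) :
  Un_cv (fun n => eps_bar q (i_of q n)) 0.
Proof.
  apply Un_cv_comp_unbounded.
  - exact (weighted_ratio_cv (l q) (l_ge1 q)).
  - exact (i_of_unbounded q).
Qed.
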